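(* Let $X$ be a Banach space, let $K\subset X$ be a nonempty weakly compact convex set and let $T\colon K\to K$ be a $\mathfrak{cm}$-nonexpansive map without fixed points such that $K$ is minimal for $T$. Let $\mathcal{M}$ be a nonempty bounded convex subset of $[K]$ with $[T](\mathcal{M})\subseteq\mathcal{M}$. Then for all $x\in K$ and all $N\in\mathbb{N}$, $$\sup_{[v_i]\in\mathcal{M}}\ \limsup_{i\to\infty}\ \sup_{A\subset\{1,\dots,N\}}\Big\|\frac1N\sum_{k\in A}(v_{i+k}-x)\Big\|=\operatorname{diam}K.$$
   Context: For a bounded convex set $C$, a nonexpansive map $T\colon C\to C$ is $\mathfrak{cm}$-nonexpansive if for all $n\in\mathbb{N}$, $y\in C$ and sequences $(u_i)_{i=1}^\infty\subset C$: $\limsup_{i\to\infty}\sup_{A\subset\{1,\dots,n\}}\|\sum_{k\in A}(Tu_{i+k}-Ty)\|\le\limsup_{i\to\infty}\sup_{A\subset\{1,\dots,n\}}\|\sum_{k\in A}(u_{i+k}-y)\|$. $K$ is minimal for $T$ if $T(K)\subseteq K$ and no proper nonempty closed convex subset of $K$ is $T$-invariant. $[X]$ denotes the quotient $\ell_\infty(X)/c_0(X)$ with norm $\|[v_i]\|=\limsup_{i\to\infty}\|v_i\|$, where $[v_i]$ is the class of the bounded sequence $(v_i)$; $[K]=\{[v_i]\in[X]: v_i\in K\ \forall i\}$ and $[T]\colon[K]\to[K]$, $[T]([v_i])=[T(v_i)]$. (The quantity $\limsup_i\sup_A\|\frac1N\sum_{k\in A}(v_{i+k}-x)\|$ does not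 depend on the representative $(v_i)$.) *)

From HB Require Import structures.
From mathcomp Require Import all_boot all_order all_algebra.
From mathcomp Require Import all_classical all_reals all_analysis.
Set Implicit Arguments. Unset Strict Implicit. Unset Printing Implicit Defensive.
Import Order.TTheory GRing.Theory Num.Theory.
Import numFieldNormedType.Exports.
Local Open Scope classical_set_scope.
Local Open Scope ring_scope.

Section Defs.
Context {R : realType} {X : normedModType R}.

Definition cont_lin_functional (f : X -> R) : Prop :=
  (forall (a : R) (x y : X), f (a *: x + y) = a * f x + f y) /\ continuous f.

(** x is a cluster point of the filter F for the weak topology of X:
    every basic weak neighbourhood of x meets every element of F *)
Definition weak_cluster (F : set_system X) (x : X) : Prop :=
  forall (n : nat) (f : 'I_n -> X -> R), (forall j, cont_lin_functional (f j)) ->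
  forall e : R, 0 < e -> forall A, F A ->
  exists y, A y /\ forall j, `|f j y - f j x| < e.

(** weak compactness (filter characterisation of compactness in the weak topology) *)
Definition weakly_compact (K : set X) : Prop :=
  forall F : set_system X, ProperFilter F -> F K -> exists x, K x /\ weak_cluster F x.

Definition is_convex (C : set X) : Prop :=
  forall x y t, C x -> C y -> 0 <= t <= 1 -> C (t *: x + (1 - t) *: y).

Definition bounded_set (C : set X) : Prop :=
  exists M : R, forall x, C x -> `|x| <= M.

Definition nonexpansive_on (C : set X) (T : X -> X) : Prop :=
  forall x y, C x -> C y -> `|T x - T y| <= `|x - y|.

Definition block_sup (n : nat) (u : nat -> X) (y : X) (i : nat) : R :=
  \big[Order.max/0]_(A : {set 'I_n}) `|\sum_(k in A) (u (i + k.+1)%N - y)|.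

Definition block_limsup (n : nat) (u : nat -> X) (y : X) : \bar R :=
  limn_esup (fun i => (block_sup n u y i)%:E).

Definition cm_nonexpansive (C : set X) (T : X -> X) : Prop :=
  nonexpansive_on C T /\
  forall (n : nat) (y : X) (u : nat -> X), C y -> (forall i, C (u i)) ->
    (block_limsup n (fun i => T (u i)) (T y) <= block_limsup n u y)%E.

Definition minimal_for (T : X -> X) (K : set X) : Prop :=
  T @` K `<=` K /\
  forall L : set X, L `<=` K -> L !=set0 -> closed L -> is_convex L ->
    T @` L `<=` L -> L = K.

(** sequences equal in [X] = l_inf(X)/c_0(X) *)
Definition seq_equiv (v w : nat -> X) : Prop :=
  (fun i => `|v i - w i|) @ \oo --> (0 : R).

Definition avg_block_limsup (N : nat) (v : nat -> X) (x : X) : \bar R :=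
  limn_esup (fun i => (\big[Order.max/0]_(A : {set 'I_N})
     `|N%:R^-1 *: \sum_(k in A) (v (i + k.+1)%N - x)|)%:E).

Definition diam (K : set X) : \bar R :=
  ereal_sup [set (`|x - y|)%:E | x in K & y in K].

End Defs.

From HB Require Import structures.
From mathcomp Require Import all_boot all_order all_algebra.
From mathcomp Require Import all_classical all_reals all_analysis.
From mathcomp Require Import finmap ring lra.
Set Implicit Arguments. Unset Strict Implicit. Unset Printing Implicit Defensive.
Import Order.TTheory GRing.Theory Num.Theory.
Import numFieldNormedType.Exports Num.Def.
Local Open Scope classical_set_scope.
Local Open Scope ring_scope.

(* Suppose avg_block_limsup N v x <= rho for every v in M. The iterates
   w n = [T]^n v0 of some v0 in M stay in M, and the set of y in K such that,
   for every e > 0, avg_block_limsup N (w n) y <= rho + e for all large n is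
   closed, convex, contains x, and is T-invariant because T is cm-nonexpansive;
   by minimality it is K. So every finite subset of K lies within rho + e of a
   single block average of some w n, which is a point of K, and weak compactness
   (tested against Hahn-Banach norming functionals) gives z in K with K inside
   the closed ball of radius rho + e about z. For a nonexpansive map on a minimal
   set, the centres of such balls form a closed convex invariant set, hence all
   of K, so diam K <= rho + e. *)

Section norming_functional.
Context {R : realType} {X : normedModType R}.

Lemma linear_functionalB (f : X -> R) :
  (forall a x y, f (a *: x + y) = a * f x + f y) -> forall x y, f (x - y) = f x - f y.
Proof. by move=> lin x y; rewrite addrC -scaleN1r lin mulN1r addrC. Qed.

(* Graphs of norm-dominated linear functionals on subspaces of [X]: the objects
   of the Zorn argument proving the Hahn-Banach theorem. *)
Definition dominated_graph (G : set (X * R)) : Prop :=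
  [/\ G (0, 0),
      forall p q a, G p -> G q -> G (a *: p.1 + q.1, a * p.2 + q.2),
      forall x a b, G (x, a) -> G (x, b) -> a = b &
      forall x a, G (x, a) -> a <= `|x|].

Lemma dominated_graph_line w : dominated_graph [set (t *: w, t * `|w|) | t in [set: R]].
Proof.
split.
- by exists 0 => //; rewrite scale0r mul0r.
- move=> _ _ a [t _ <-] [s _ <-] /=.
  by exists (a * t + s) => //; rewrite scalerDl scalerA mulrDl mulrA.
- move=> x a b [t _ [<- <-]] [s _ []].
  have [->|w0] := eqVneq w 0; first by rewrite normr0 !mulr0.
  by move=> /eqP; rewrite -subr_eq0 -scalerBl scaler_eq0 (negbTE w0) subr_eq0 orbF => /eqP -> <-.
- by move=> x a [t _ [<- <-]]; rewrite normrZ ler_wpM2r // ler_norm.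
Qed.

Lemma dominated_graph_scale G d a t : dominated_graph G -> G (d, a) -> G (t *: d, t * a).
Proof. by case=> G0 Glin _ _ Gda; have := Glin _ _ t Gda G0; rewrite /= !addr0. Qed.

Lemma dominated_graph_gap G x0 : dominated_graph G ->
  exists c, forall d a t, G (d, a) -> a + t * c <= `|d + t *: x0|.
Proof.
move=> gG; have [G0 Glin _ Gdom] := gG.
have sep d1 a1 d2 a2 : G (d1, a1) -> G (d2, a2) -> a2 - `|d2 - x0| <= `|d1 + x0| - a1.
  move=> G1 G2; have := Gdom _ _ (Glin _ _ 1 G1 G2); rewrite /= scale1r mul1r.
  have : `|d1 + d2| <= `|d1 + x0| + `|d2 - x0|.
    by rewrite -[d1 + d2]addr0 -(subrr x0) addrACA ler_normD.
  lra.
pose S := [set p.2 - `|p.1 - x0| | p in G].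
have S_ub : has_ubound S by exists (`|0 + x0| - 0) => _ [[d a] Gda <-]; exact: sep G0 Gda.
have S0 : S !=set0 by exists (0 - `|0 - x0|), (0, 0).
have normZV (d u : X) (s : R) : 0 < s -> `|s^-1 *: d + u| = s^-1 * `|d + s *: u|.
  by move=> s0; rewrite -[u in LHS](scalerK (lt0r_neq0 s0)) -scalerDr normrZ gtr0_norm ?invr_gt0.
exists (sup S) => d a t Gda.
have [t0|t0|->] := ltgtP t 0; last by rewrite mul0r scale0r !addr0; exact: Gdom.
- have s0 : 0 < - t by rewrite oppr_gt0.
  have : (- t)^-1 * a - `|(- t)^-1 *: d - x0| <= sup S.
    by apply: ub_le_sup => //; exists ((- t)^-1 *: d, (- t)^-1 * a); first exact: dominated_graph_scale.
  rewrite normZV // scalerN scaleNr opprK -mulrBr ler_pdivrMl //.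
  lra.
- have : sup S <= `|t^-1 *: d + x0| - t^-1 * a.
    by apply: ge_sup => // _ [[d2 a2] G2 <-]; exact: sep (dominated_graph_scale t^-1 gG Gda) G2.
  rewrite normZV // -mulrBr ler_pdivlMl //.
  lra.
Qed.

Lemma dominated_graph_extend G x0 : dominated_graph G -> ~ (exists a, G (x0, a)) ->
  exists2 B, dominated_graph B & G `<` B.
Proof.
move=> gG Gx0; have [G0 Glin Gfun _] := gG.
have [c Gc] := dominated_graph_gap x0 gG.
pose B := [set (p.1 + t *: x0, p.2 + t * c) | p in G & t in [set: R]].
have GB : G `<=` B.
  by move=> [d a] Gda; exists (d, a) => //; exists 0 => //; rewrite scale0r mul0r !addr0.
exists B; last first.
  split=> // BG; apply: Gx0; exists c; apply: BG.
  by exists (0, 0) => //; exists 1 => //; rewrite scale1r mul1r !add0r.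
split.
- exact: GB.
- move=> _ _ a [[d1 a1] G1 [t1 _ <-]] [[d2 a2] G2 [t2 _ <-]] /=.
  exists (a *: d1 + d2, a * a1 + a2); first exact: (Glin _ _ a G1 G2).
  exists (a * t1 + t2) => //=; congr (_, _).
    by rewrite scalerDr scalerDl scalerA addrACA.
  by rewrite mulrDr mulrDl mulrA addrACA.
- move=> x a b [[d1 a1] G1 [t1 _ [<- <-]]] [[d2 a2] G2 [t2 _ [e <-]]] /=.
  have [t12|t12] := eqVneq t1 t2.
    by move: e; rewrite t12 => /addIr d21; rewrite d21 in G2; rewrite (Gfun _ _ _ G1 G2).
  exfalso; apply: Gx0.
  have G21 := Glin _ _ (-1) G1 G2; rewrite /= scaleN1r mulN1r in G21.
  have -> : x0 = (t1 - t2)^-1 *: (- d1 + d2).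
    by rewrite -[d2](addrK (t2 *: x0)) e -addrA addKr -scalerBl scalerK ?subr_eq0.
  by eexists; exact: dominated_graph_scale G21.
- by move=> _ _ [[d a] Gda [t _ [<- <-]]]; exact: Gc.
Qed.

Lemma dominated_graph_bigcup (F : set (set (X * R))) :
  total_on F subset -> (forall G, F G -> G !=set0 -> dominated_graph G) ->
  \bigcup_(G in F) G !=set0 -> dominated_graph (\bigcup_(G in F) G).
Proof.
move=> Ftot Fdom0 [p0 [G0 FG0 G0p0]].
have Fdom G p : F G -> G p -> dominated_graph G by move=> FG Gp; apply: Fdom0 => //; exists p.
have common G1 G2 p q : F G1 -> F G2 -> G1 p -> G2 q -> exists2 G, F G & G p /\ G q.
  move=> FG1 FG2 G1p G2q.
  case: (Ftot _ _ FG1 FG2) => [G12|G21]; [exists G2|exists G1] => //; split=> //.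
  - exact: G12.
  - exact: G21.
split.
- by exists G0 => //; case: (Fdom _ _ FG0 G0p0).
- move=> p q a [G1 FG1 G1p] [G2 FG2 G2q].
  have [G FG [Gp Gq]] := common _ _ _ _ FG1 FG2 G1p G2q.
  by exists G => //; case: (Fdom _ _ FG Gp) => _ Glin _ _; exact: Glin.
- move=> x a b [G1 FG1 G1p] [G2 FG2 G2q].
  have [G FG [Gp Gq]] := common _ _ _ _ FG1 FG2 G1p G2q.
  by case: (Fdom _ _ FG Gp) => _ _ Gfun _; exact: Gfun Gp Gq.
- by move=> x a [G FG Gp]; case: (Fdom _ _ FG Gp) => _ _ _ Gdom; exact: Gdom.
Qed.

Lemma norming_functional (w : X) : exists f : X -> R,
  [/\ forall a x y, f (a *: x + y) = a * f x + f y,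
      forall x, `|f x| <= `|x| & f w = `|w|].
Proof.
(* [set0] is allowed so that the union of the empty chain satisfies [P]. *)
pose P G := G = set0 \/ dominated_graph G /\ G (w, `|w|).
have wline : [set (t *: w, t * `|w|) | t in [set: R]] (w, `|w|).
  by exists 1 => //; rewrite scale1r mul1r.
have [|A [PA Amax]] := @Zorn_bigcup _ P.
  move=> F FP Ftot.
  have [[p [G FG Gp]]|F0] := pselect (\bigcup_(G in F) G !=set0); last first.
    by left; apply/seteqP; split=> // p Fp; apply: F0; exists p.
  have FPr H q : F H -> H q -> dominated_graph H /\ H (w, `|w|).
    by move=> FH Hq; case: (FP _ FH) => // H0; rewrite H0 in Hq.
  right; split; last by exists G => //; case: (FPr _ _ FG Gp).
  apply: dominated_graph_bigcup => // [H FH [q Hq]|]; first by case: (FPr _ _ FH Hq).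
  by exists p, G.
have [Adom Aw] : dominated_graph A /\ A (w, `|w|).
  case: PA => // A0; exfalso; apply: (Amax _ _ (or_intror (conj (dominated_graph_line w) wline))).
  by rewrite A0; split=> // /(_ _ wline).
have Atot x : exists a, A (x, a).
  apply: contrapT => Ax; have [B Bdom AB] := dominated_graph_extend Adom Ax.
  by apply: (Amax _ AB); right; split=> //; apply: AB.1.
have [f Af] := choice Atot; have [_ Alin Afun Adom'] := Adom.
have lin a x y : f (a *: x + y) = a * f x + f y.
  by apply: Afun (Af _) _; exact: Alin (Af x) (Af y).
exists f; split=> // [x|]; last exact: Afun (Af w) Aw.
have f0 : f 0 = 0 by have := lin 1 0 0; rewrite scale1r addr0 mul1r; lra.
have := Adom' _ _ (Af (- x)); rewrite -scaleN1r -[_ *: x]addr0 lin f0 addr0 normrZ.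
by rewrite normrN1 mul1r mulN1r addr0 lerNl => Nx; rewrite ler_norml Nx Adom' ?Af.
Qed.

Lemma norming_cont_lin_functional (w : X) : exists f : X -> R,
  [/\ cont_lin_functional f, forall x, `|f x| <= `|x| & f w = `|w|].
Proof.
have [f [lin nf fw]] := norming_functional w.
exists f; split=> //; split=> // x; apply/cvgrPdist_lt => e e0.
near=> y; rewrite -linear_functionalB //; apply: le_lt_trans (nf _) _.
near: y; exact: (@cvgr_dist_lt _ _ _ (nbhs x) _ id _ (@cvg_id _ _)).
Unshelve. all: by end_near. Qed.
End norming_functional.

Section weak_topology.
Context {R : realType} {X : normedModType R}.

Lemma weak_cluster_normr_le (F : set_system X) z y r E :
  weak_cluster F z -> F E -> E `<=` closed_ball_ normr y r -> `|y - z| <= r.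
Proof.
move=> Fz FE Er; have [f [fcl nf fyz]] := norming_cont_lin_functional (y - z).
have fB := linear_functionalB fcl.1.
apply/ler_addgt0Pr => e e0.
have [p [Ep /(_ ord0) fpz]] := Fz 1%N (fun=> f) (fun=> fcl) _ e0 _ FE.
have := Er _ Ep; rewrite /closed_ball_ /= => yp.
have := nf (y - p); rewrite -fyz !fB => /ler_normlP[_].
move: fpz; rewrite ltr_norml => /andP[]; lra.
Qed.

Lemma weakly_compact_closed (K : set X) : weakly_compact K -> closed K.
Proof.
move=> Kw y Ky; have [z [Kz Fz]] := Kw _ (within_nbhs_proper Ky) (withinT _ _).
suff -> : y = z by [].
apply/eqP; rewrite -subr_eq0 -normr_le0; apply/ler_addgt0Pr => e e0; rewrite add0r.
apply: (weak_cluster_normr_le Fz _ (@subset_refl _ _)).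
apply: filterS (nbhsx_ballx y _ e0) => p; rewrite -ball_normE /= => yp _; exact: ltW.
Qed.

Lemma weakly_compact_finI_center (K D : set X) r :
  weakly_compact K -> D !=set0 -> finI D (fun y => K `&` closed_ball_ normr y r) ->
  exists2 z, K z & forall y, D y -> `|y - z| <= r.
Proof.
move=> Kw [y0 Dy0] DI.
pose F := filter_from (finI_from D (fun y => K `&` closed_ball_ normr y r)) id.
have FK : F K by exists (K `&` closed_ball_ normr y0 r); [exact: finI_from1 | exact: subIsetl].
have [z [Kz Fz]] := Kw F (finI_filter DI) FK.
exists z => // y Dy; apply: (weak_cluster_normr_le Fz _ (@subIsetr _ K _)).
by exists (K `&` closed_ball_ normr y r) => //; exact: finI_from1.
Qed.

End weak_topology.

Section convexity.
Context {R : realType} {X : normedModType R}.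

Lemma is_convexI (A B : set X) : is_convex A -> is_convex B -> is_convex (A `&` B).
Proof. by move=> cA cB x y t [Ax Bx] [Ay By] t01; split; [exact: cA|exact: cB]. Qed.

Lemma is_convex_bigcap (I : Type) (D : set I) (A : I -> set X) :
  (forall i, D i -> is_convex (A i)) -> is_convex (\bigcap_(i in D) A i).
Proof. by move=> cA x y t Ax Ay t01 i Di; apply: cA; [|exact: Ax|exact: Ay|]. Qed.

Lemma is_convex_closed_ball_ (c : X) r : is_convex (closed_ball_ normr c r).
Proof.
move=> x y t; rewrite /closed_ball_ /= => cx cy /andP[t0 t1].
have -> : c - (t *: x + (1 - t) *: y) = t *: (c - x) + (1 - t) *: (c - y).
  by rewrite !scalerBr addrACA -opprD -scalerDl subrKC scale1r.
apply: (le_trans (ler_normD _ _)); rewrite !normrZ !ger0_norm ?subr_ge0 //.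
nra.
Qed.

Lemma is_convex_avg (K : set X) (f : nat -> X) N : is_convex K -> (forall k, K (f k)) ->
  (0 < N)%N -> K (N%:R^-1 *: \sum_(k < N) f k).
Proof.
move=> Kc Kf; elim: N => // -[_ _|N IH _]; first by rewrite big_ord1 invr1 scale1r.
have N1 : N.+1%:R != 0 :> R by rewrite pnatr_eq0.
pose t : R := N.+1%:R / N.+2%:R.
have -> : N.+2%:R^-1 *: \sum_(k < N.+2) f k =
          t *: (N.+1%:R^-1 *: \sum_(k < N.+1) f k) + (1 - t) *: f N.+1.
  rewrite big_ord_recr /= scalerDr scalerA /t mulrAC divff // div1r; congr (_ + _ *: _).
  by field; rewrite -natrD pnatr_eq0.
apply: Kc (IH isT) (Kf _) _.
by rewrite divr_ge0 ?ler0n //= ler_pdivrMr ?ltr0n // mul1r ler_nat.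
Qed.

End convexity.

Section minimal_invariant_set.
Context {R : realType} {X : normedModType R}.
Variables (K : set X) (T : X -> X).
Hypotheses (Kcl : closed K) (Kcvx : is_convex K) (Tne : nonexpansive_on K T)
  (Kmin : minimal_for T K).

Let common_ball (P : set X) (rho : R) := K `&` \bigcap_(c in P) closed_ball_ normr c rho.

Let common_ball_eq P rho :
  common_ball P rho !=set0 -> T @` common_ball P rho `<=` common_ball P rho ->
  common_ball P rho = K.
Proof.
move=> P0 TP; apply: Kmin.2 => //; first exact: subIsetl.
  by apply: closedI => //; apply: closed_bigI => c _; exact: closed_closed_ball_.
by apply: is_convexI => //; apply: is_convex_bigcap => c _; exact: is_convex_closed_ball_.
Qed.

Lemma minimal_for_diam_le z rho : K z -> (forall y, K y -> `|y - z| <= rho) ->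
  (diam K <= rho%:E)%E.
Proof.
move=> Kz Kzr; have [TK _] := Kmin.
have Kball u : K u -> (forall y, K y -> `|y - u| <= rho) -> forall y, K y -> `|y - T u| <= rho.
  move=> Ku Kur; have KTu : K (T u) by apply: TK; exists u.
  suff <- : common_ball [set T u] rho = K by move=> y [_ /(_ _ erefl)]; rewrite /closed_ball_ /= distrC.
  apply: common_ball_eq.
    by exists (T u); split=> // _ ->; rewrite /closed_ball_ /= subrr normr0 (le_trans _ (Kur _ Kz)).
  move=> _ [y [Ky _] <-]; split; first by apply: TK; exists y.
  by move=> _ ->; rewrite /closed_ball_ /= (le_trans (Tne Ku Ky)) // distrC Kur.
have centers : common_ball K rho = K.
  apply: common_ball_eq; first by exists z.
  move=> _ [u [Ku Kur] <-]; split; first by apply: TK; exists u.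
  by move=> y Ky; apply: Kball.
apply: ge_ereal_sup => _ [p Kp [q Kq <-]]; rewrite lee_fin.
by move: Kp; rewrite -centers => -[_ /(_ q Kq)]; rewrite /closed_ball_ /= distrC.
Qed.

End minimal_invariant_set.

Section limn_esup_bounds.
Context {R : realType}.
Local Open Scope ereal_scope.

Lemma limn_esup_le (u : nat -> \bar R) c :
  (\forall n \near \oo, u n <= c) -> limn_esup u <= c.
Proof.
move=> [n0 _ un0]; apply: (@le_trans _ _ (ereal_sup (u @` [set n | (n0 <= n)%N]))).
  by apply: ereal_inf_lbound; exists [set n | (n0 <= n)%N] => //; exists n0.
by apply: ge_ereal_sup => _ [n n0n <-]; exact: un0.
Qed.

Lemma limn_esup_lt_near (u : nat -> \bar R) c :
  limn_esup u < c -> \forall n \near \oo, u n < c.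
Proof.
move=> /ereal_inf_lt[_ [V Vn <-] Vc]; apply: filterS Vn => n Vn.
by apply: le_lt_trans Vc; apply: ereal_sup_ubound; exists n.
Qed.

Lemma limn_esup_leP (u : nat -> R) c : limn_esup (fun n => (u n)%:E) <= c%:E <->
  forall e, (0 < e)%R -> \forall n \near \oo, (u n <= c + e)%R.
Proof.
split=> [uc e e0|ue].
  have /limn_esup_lt_near : limn_esup (fun n => (u n)%:E) < (c + e)%:E.
    by apply: le_lt_trans uc _; rewrite lte_fin ltrDl.
  by apply: filterS => n; rewrite lte_fin => /ltW.
apply/lee_addgt0Pr => e e0; apply: limn_esup_le; apply: filterS (ue e e0) => n.
by rewrite lee_fin.
Qed.

End limn_esup_bounds.

Section avg_block.
Context {R : realType} {X : normedModType R}.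
Variable N : nat.
Hypothesis N0 : (0 < N)%N.
Implicit Types (v : nat -> X) (y : X).

Definition avg_block_sup v y (i : nat) : R :=
  \big[Order.max/0]_(A : {set 'I_N}) `|N%:R^-1 *: \sum_(k in A) (v (i + k.+1)%N - y)|.

Let N_gt0 : 0 < N%:R :> R. Proof. by rewrite ltr0n. Qed.

Let card_le (A : {set 'I_N}) : #|A|%:R <= N%:R :> R.
Proof. by rewrite ler_nat -[leqRHS]card_ord max_card. Qed.

Lemma avg_block_supE v y i : avg_block_sup v y i = N%:R^-1 * block_sup N v y i.
Proof.
rewrite /avg_block_sup /block_sup; elim/big_rec2: _ => [|A a b _ ->]; first by rewrite mulr0.
by rewrite maxr_pMr ?invr_ge0 ?ler0n // normrZ ger0_norm // invr_ge0 ler0n.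
Qed.

Lemma avg_block_sup_ge0 v y i : 0 <= avg_block_sup v y i.
Proof. exact: bigmax_ge_id. Qed.

Lemma le_avg_block_sup v y i (A : {set 'I_N}) :
  `|N%:R^-1 *: \sum_(k in A) (v (i + k.+1)%N - y)| <= avg_block_sup v y i.
Proof. exact: (le_bigmax _ (fun A : {set 'I_N} => `|_ *: \sum_(k in A) _|)). Qed.

Lemma avg_block_sup_le v y i rho : 0 <= rho ->
  (forall k, `|v k - y| <= rho) -> avg_block_sup v y i <= rho.
Proof.
move=> rho0 vy; apply/bigmax_leP; split=> // A _.
rewrite normrZ ger0_norm ?invr_ge0 ?ler0n // ler_pdivrMl //.
apply: le_trans (ler_norm_sum _ _ _) _; apply: le_trans (ler_sum _ (fun k _ => vy _)) _.
by rewrite sumr_const -[rho *+ _]mulr_natl ler_wpM2r.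
Qed.

Lemma avg_block_sup_le_dist v y y' i :
  avg_block_sup v y i <= avg_block_sup v y' i + `|y - y'|.
Proof.
apply/bigmax_leP; split=> [|A _]; first by rewrite addr_ge0 ?avg_block_sup_ge0.
have -> : \sum_(k in A) (v (i + k.+1)%N - y) =
          \sum_(k in A) (v (i + k.+1)%N - y') + (y' - y) *+ #|A|.
  by rewrite -sumr_const -big_split; apply: eq_bigr => k _ /=; rewrite addrA subrK.
rewrite scalerDr (le_trans (ler_normD _ _)) // lerD ?le_avg_block_sup //.
rewrite normrZ normrMn distrC ger0_norm ?invr_ge0 ?ler0n // -[ `|_| *+ _]mulr_natr mulrCA.
by rewrite ler_piMr // ler_pdivrMl // mulr1.
Qed.

Lemma avg_block_sup_convex v y1 y2 t i : 0 <= t <= 1 ->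
  avg_block_sup v (t *: y1 + (1 - t) *: y2) i <=
  t * avg_block_sup v y1 i + (1 - t) * avg_block_sup v y2 i.
Proof.
case/andP=> t0 t1; apply/bigmax_leP; split=> [|A _].
  by rewrite addr_ge0 // mulr_ge0 ?avg_block_sup_ge0 ?subr_ge0.
have -> : \sum_(k in A) (v (i + k.+1)%N - (t *: y1 + (1 - t) *: y2)) =
    t *: \sum_(k in A) (v (i + k.+1)%N - y1) + (1 - t) *: \sum_(k in A) (v (i + k.+1)%N - y2).
  rewrite !scaler_sumr -big_split; apply: eq_bigr => k _ /=.
  by rewrite !scalerBr addrACA -scalerDl subrKC scale1r opprD.
rewrite scalerDr !scalerA ![N%:R^-1 * _]mulrC -!scalerA (le_trans (ler_normD _ _)) //.
rewrite (normrZ t) (normrZ (1 - t)) !ger0_norm ?subr_ge0 //.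
by rewrite lerD // ler_wpM2l ?subr_ge0 // le_avg_block_sup.
Qed.

Lemma normr_avg_le_avg_block_sup v y i :
  `|N%:R^-1 *: (\sum_(k < N) v (i + k.+1)%N) - y| <= avg_block_sup v y i.
Proof.
apply: le_trans _ (le_avg_block_sup v y i [set: 'I_N]).
rewrite big_split /= sumr_const cardsT card_ord scalerDr -[- y *+ N]scaler_nat scalerA.
rewrite mulVf ?lt0r_neq0 // scale1r.
by under [X in _ <= `|_ *: X + _|]eq_bigl do rewrite inE.
Qed.

End avg_block.

Section avg_block_limsup.
Context {R : realType} {X : normedModType R}.
Variable N : nat.
Hypothesis N0 : (0 < N)%N.
Implicit Types (v : nat -> X) (y : X) (c : R).

Lemma avg_block_limsupE v y :
  avg_block_limsup N v y = limn_esup (fun i => (avg_block_sup N v y i)%:E).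
Proof. by []. Qed.

Lemma avg_block_limsup_le_dist v y y' c : (avg_block_limsup N v y' <= c%:E)%E ->
  (avg_block_limsup N v y <= (c + `|y - y'|)%:E)%E.
Proof.
rewrite !avg_block_limsupE !limn_esup_leP => vy' e /vy'; apply: filterS => i.
by have := avg_block_sup_le_dist N0 v y y' i; lra.
Qed.

Lemma avg_block_limsup_convex v y1 y2 t c : 0 <= t <= 1 ->
  (avg_block_limsup N v y1 <= c%:E)%E -> (avg_block_limsup N v y2 <= c%:E)%E ->
  (avg_block_limsup N v (t *: y1 + (1 - t) *: y2)%R <= c%:E)%E.
Proof.
move=> t01; rewrite !avg_block_limsupE !limn_esup_leP => vy1 vy2 e e0.
apply: filterS2 (vy1 e e0) (vy2 e e0) => i h1 h2.
have := avg_block_sup_convex N v y1 y2 i t01; case/andP: t01; nra.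
Qed.

Lemma avg_block_limsup_leP v y c :
  (avg_block_limsup N v y <= c%:E)%E <-> (block_limsup N v y <= (N%:R * c)%:E)%E.
Proof.
have N_gt0 : 0 < N%:R :> R by rewrite ltr0n.
rewrite avg_block_limsupE !limn_esup_leP; split=> vy e e0.
  apply: filterS (vy (N%:R^-1 * e) _) => [i|]; last by rewrite mulr_gt0 ?invr_gt0.
  by rewrite avg_block_supE ler_pdivrMl // mulrDr mulVKf ?lt0r_neq0.
apply: filterS (vy (N%:R * e) _) => [i|]; last by rewrite mulr_gt0.
by rewrite avg_block_supE ler_pdivrMl // mulrDr.
Qed.

Lemma avg_block_limsup_cm (K : set X) (T : X -> X) v y c :
  cm_nonexpansive K T -> K y -> (forall i, K (v i)) ->
  (avg_block_limsup N v y <= c%:E)%E ->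
  (avg_block_limsup N (fun i => T (v i)) (T y) <= c%:E)%E.
Proof. by move=> [_ Tcm] Ky Kv; rewrite !avg_block_limsup_leP; exact/le_trans/Tcm. Qed.

Lemma avg_block_limsup_le_diam (K : set X) v x : (forall i, K (v i)) -> K x ->
  (avg_block_limsup N v x <= diam K)%E.
Proof.
move=> Kv Kx.
have Kdiam p q : K p -> K q -> ((`|p - q|)%:E <= diam K)%E.
  by move=> Kp Kq; apply: ereal_sup_ubound; exists p => //; exists q.
move: Kdiam (Kdiam _ _ Kx Kx); case: (diam K) => [d Kdiam _| _ _ |_]; last 2 first.
- exact: leey.
- by rewrite subrr normr0 leeNy_eq.
apply: limn_esup_le; apply: nearW => i; rewrite lee_fin.
apply: (avg_block_sup_le N0) => [|k]; last by rewrite -lee_fin Kdiam.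
by have := Kdiam _ _ Kx Kx; rewrite subrr normr0 lee_fin.
Qed.

End avg_block_limsup.

Section orbit_averages.
Context {R : realType} {X : normedModType R}.
Variables (K : set X) (T : X -> X) (N : nat) (w : nat -> nat -> X).
Hypotheses (N0 : (0 < N)%N) (Kwc : weakly_compact K) (Kcvx : is_convex K)
  (Tcm : cm_nonexpansive K T) (Kmin : minimal_for T K)
  (Kw : forall n i, K (w n i)) (wS : forall n, w n.+1 = (fun i => T (w n i))).

Let Kcl : closed K := weakly_compact_closed Kwc.

Definition asymptotic_ball (rho : R) : set X := [set y | K y /\ forall e, 0 < e ->
  \forall n \near \oo, (avg_block_limsup N (w n) y <= (rho + e)%:E)%E].

Lemma asymptotic_ball_closed rho : closed (asymptotic_ball rho).
Proof.
move=> y yL; split; first by apply: Kcl; apply: closureS yL => ? [].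
move=> e e0; have e20 : 0 < e / 2 by rewrite divr_gt0.
have [p [[_ Lp] yp]] := yL _ (nbhsx_ballx y _ e20); move: yp; rewrite -ball_normE /= => yp.
apply: filterS (Lp _ e20) => n /(avg_block_limsup_le_dist N0 y) /le_trans; apply.
by rewrite lee_fin -addrA lerD2l [leRHS]splitr lerD2l ltW.
Qed.

Lemma asymptotic_ball_convex rho : is_convex (asymptotic_ball rho).
Proof.
move=> y1 y2 t [Ky1 L1] [Ky2 L2] t01; split; first exact: Kcvx.
move=> e e0; apply: filterS2 (L1 _ e0) (L2 _ e0) => n.
exact: avg_block_limsup_convex.
Qed.

Lemma asymptotic_ball_invariant rho : T @` asymptotic_ball rho `<=` asymptotic_ball rho.
Proof.
move=> _ [y [Ky Ly] <-]; split; first by apply: Kmin.1; exists y.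
move=> e e0; apply: near_inftyS; apply: filterS (Ly _ e0) => n.
rewrite wS; exact: (avg_block_limsup_cm N0 Tcm Ky (Kw n)).
Qed.

Lemma asymptotic_ball_eq rho x : K x ->
  (forall n, (avg_block_limsup N (w n) x <= rho%:E)%E) -> asymptotic_ball rho = K.
Proof.
move=> Kx wx; apply: Kmin.2.
- by move=> y [].
- exists x; split=> // e e0; apply: nearW => n; apply: le_trans (wx n) _.
  by rewrite lee_fin lerDl ltW.
- exact: asymptotic_ball_closed.
- exact: asymptotic_ball_convex.
- exact: asymptotic_ball_invariant.
Qed.

Lemma orbit_averages_diam_le rho x : K x ->
  (forall n, (avg_block_limsup N (w n) x <= rho%:E)%E) -> (diam K <= rho%:E)%E.
Proof.
move=> Kx wx; apply/lee_addgt0Pr => e e0; rewrite -EFinD.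
have LK := asymptotic_ball_eq Kx wx.
have [|z Kz Kzr] := weakly_compact_finI_center Kwc (ex_intro _ x Kx) (r := rho + e).
  move=> D DK; have e20 : 0 < e / 2 by rewrite divr_gt0.
  have LD (y : X) : y \in D ->
      \forall n \near \oo, (avg_block_limsup N (w n) y <= (rho + e / 2)%:E)%E.
    by move=> /DK /set_mem; rewrite -LK => -[_]; apply.
  have [n /= wnD] := filter_ex (filter_bigI _ LD).
  have LDi (y : X) : y \in D -> \forall i \near \oo, avg_block_sup N (w n) y i <= rho + e.
    move=> yD; apply: filterS ((limn_esup_leP _ _).1 (wnD y yD) _ e20) => i.
    by rewrite -addrA -splitr.
  have [i /= wiD] := filter_ex (filter_bigI _ LDi).
  exists (N%:R^-1 *: \sum_(k < N) w n (i + k.+1)%N) => y /= yD.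
  split; first exact: (is_convex_avg (f := fun k => w n (i + k.+1)%N)).
  rewrite /closed_ball_ /= distrC.
  exact: le_trans (normr_avg_le_avg_block_sup N0 _ _ _) (wiD y yD).
exact: (minimal_for_diam_le Kcl Kcvx Tcm.1 Kmin Kz Kzr).
Qed.

End orbit_averages.

Theorem lemma3p7 (R : realType) (X : completeNormedModType R)
  (K : set X) (T : X -> X)
  (hK0 : K !=set0) (hKw : weakly_compact K) (hKc : is_convex K)
  (hTK : T @` K `<=` K) (hTcm : cm_nonexpansive K T)
  (hfix : ~ exists x, K x /\ T x = x) (hmin : minimal_for T K)
  (M : set (nat -> X))
  (hMK : forall v, M v -> forall i, K (v i))
  (hMsat : forall v w, M v -> (forall i, K (w i)) -> seq_equiv v w -> M w)
  (hM0 : M !=set0)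
  (hMb : exists c : R, forall v, M v -> (limn_esup (fun i => (`|v i|)%:E) <= c%:E)%E)
  (hMc : forall v w t, M v -> M w -> 0 <= t <= 1 ->
           M (fun i => t *: v i + (1 - t) *: w i))
  (hMT : forall v, M v -> M (fun i => T (v i))) :
  forall (x : X) (N : nat), K x -> (0 < N)%N ->
    ereal_sup [set avg_block_limsup N v x | v in M] = diam K.
Proof.
move=> x N Kx N0; set S := ereal_sup _.
have [v0 Mv0] := hM0; pose w n := iter n (fun v i => T (v i)) v0.
have Mw n : M (w n) by elim: n => //= n; exact: hMT.
have Kw n i : K (w n i) by exact: hMK _ (Mw n) i.
have diam_le rho : (forall v, M v -> (avg_block_limsup N v x <= rho%:E)%E) ->
    (diam K <= rho%:E)%E.
  move=> Mrho; exact: (orbit_averages_diam_le N0 hKw hKc hTcm hmin Kw (fun=> erefl) Kx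
                         (fun n => Mrho _ (Mw n))).
have MS v : M v -> (avg_block_limsup N v x <= S)%E by move=> Mv; apply: ereal_sup_ubound; exists v.
apply/eqP; rewrite eq_le; apply/andP; split.
  by apply: ge_ereal_sup => _ [v Mv <-]; exact: (avg_block_limsup_le_diam N0 (hMK _ Mv) Kx).
move: MS; case: S => [s MS|_|MS]; [exact: diam_le|exact: leey|].
have xx : ((`|x - x|)%:E <= diam K)%E by apply: ereal_sup_ubound; exists x => //; exists x.
have := le_trans xx (diam_le (-1) (fun v Mv => le_trans (MS v Mv) (leNye _))).
by rewrite subrr normr0 lee_fin ler0N1.
Qed.
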